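(* For every integer $n\ge 2$ there exists a (finite) inverse semigroup $I$ with $\sigma_i(I)=n$.
   Context: An inverse semigroup is a semigroup $I$ such that for every $a\in I$ there is a unique $a^{-1}\in I$ with $aa^{-1}a=a$ and $a^{-1}aa^{-1}=a^{-1}$. An inverse subsemigroup is a subsemigroup closed under $a\mapsto a^{-1}$. $\sigma_i(I)$ is the least positive integer $n$ such that $I$ is the union of $n$ proper inverse subsemigroups, or $\infty$ if no such finite $n$ exists. *)

From mathcomp Require Import all_boot.
Set Implicit Arguments. Unset Strict Implicit. Unset Printing Implicit Defensive.

Definition is_inverse_semigroup (T : Type) (mul : T -> T -> T) (inv : T -> T) : Prop :=
  (forall a b c, mul a (mul b c) = mul (mul a b) c) /\
  (forall a, mul (mul a (inv a)) a = a /\ mul (mul (inv a) a) (inv a) = inv a) /\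
  (forall a b, mul (mul a b) a = a -> mul (mul b a) b = b -> b = inv a).

Definition is_inverse_subsemigroup (T : finType) (mul : T -> T -> T) (inv : T -> T)
    (S : {set T}) : Prop :=
  (forall a b, a \in S -> b \in S -> mul a b \in S) /\
  (forall a, a \in S -> inv a \in S).

Definition inv_coverable (T : finType) (mul : T -> T -> T) (inv : T -> T) (n : nat) : Prop :=
  exists F : 'I_n -> {set T},
    (forall i, F i \proper [set: T] /\ is_inverse_subsemigroup mul inv (F i)) /\
    (forall x : T, exists i, x \in F i).

Definition sigma_i_eq (T : finType) (mul : T -> T -> T) (inv : T -> T) (n : nat) : Prop :=
  0 < n /\ inv_coverable mul inv n /\
  (forall m, 0 < m -> m < n -> ~ inv_coverable mul inv m).

From mathcomp Require Import all_boot all_fingroup all_solvable zmodp zify.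
Set Implicit Arguments. Unset Strict Implicit. Unset Printing Implicit Defensive.
(* For n = 2 the two-element semilattice works.  For n = m + 1 with m >= 2 take
   the Brandt semigroup B(G, 2) over a group G whose proper subgroups all have
   index at least m, one of them exactly m.  It is covered by its diagonal
   subsemigroup together with m conjugates of B(K0, 2), one for each coset of K0.
   Conversely, a proper inverse subsemigroup meets the row {(1, g, 2)} either not
   at all or in a coset of a proper subgroup, so counting that row and the
   nonidentity part of {(1, g, 1)} shows that m members never suffice.  Groups of
   prime order give m = 2, 3, and the simple groups A_m give every m >= 5.  No
   group has minimal proper index 4, so n = 5 is realised by A4 itself: it is
   covered by its Klein subgroup and its four subgroups of order 3, while any two
   of five elements, one from each, generate it. *)

Lemma card_le_sum_cover (T : finType) k (A : {set T}) (F : 'I_k -> {set T}) :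
  (forall x, x \in A -> exists i, x \in F i) -> #|A| <= \sum_(i < k) #|F i|.
Proof.
move=> cover; apply: (@leq_trans #|\bigcup_(i < k) F i|).
  apply: subset_leq_card; apply/subsetP => x /cover [i Fx].
  by apply/bigcupP; exists i.
elim/big_ind2: _ => [|x1 y1 x2 y2 le1 le2|//]; first by rewrite cards0.
by rewrite cardsU (leq_trans (leq_subr _ _)) ?leq_add.
Qed.

Section InverseCovers.
Variables (T : finType) (mul : T -> T -> T) (inv : T -> T).

Lemma inv_coverable_card (I : finType) (F : I -> {set T}) :
  (forall i, F i \proper [set: T] /\ is_inverse_subsemigroup mul inv (F i)) ->
  (forall x, exists i, x \in F i) -> inv_coverable mul inv #|I|.
Proof.
move=> Fok cover; exists (fun i => F (enum_val i)); split => [i|x]; first exact: Fok.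
by have [i Fx] := cover x; exists (enum_rank i); rewrite enum_rankK.
Qed.

Definition generates2 (x y : T) : Prop :=
  forall S : {set T}, is_inverse_subsemigroup mul inv S -> x \in S -> y \in S -> S = [set: T].

Lemma not_inv_coverable_generating n (x : 'I_n -> T) :
  (forall i j, i != j -> generates2 (x i) (x j)) ->
  forall k, k < n -> ~ inv_coverable mul inv k.
Proof.
move=> gen k lt_kn [F [Fok cover]].
pose c j := xchoose (cover (x j)).
have /injectivePn [j [j' ne_jj' eq_c]] : ~~ injectiveb c.
  apply/injectiveP => /leq_card; rewrite !card_ord; lia.
have Fj' := xchooseP (cover (x j')); rewrite -/(c j') -eq_c in Fj'.
have := (Fok (c j)).1; rewrite properT.
by rewrite (gen _ _ ne_jj' _ (Fok (c j)).2 (xchooseP (cover (x j))) Fj') eqxx.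
Qed.

Lemma sigma_i_eq_generating_cover n (F : 'I_n -> {set T}) (x : 'I_n -> T) :
  0 < n ->
  (forall i, F i \proper [set: T] /\ is_inverse_subsemigroup mul inv (F i)) ->
  (forall z, exists i, z \in F i) ->
  (forall i j, i != j -> generates2 (x i) (x j)) ->
  sigma_i_eq mul inv n.
Proof.
move=> n_gt0 Fok cover gen; split=> //; split; first by exists F.
by move=> k _; apply: not_inv_coverable_generating gen k.
Qed.

Definition closure_step (l : seq T) : seq T :=
  undup (l ++ [seq mul a b | a <- l, b <- l] ++ map inv l).

Lemma closure_step_sub (S : {set T}) l :
  is_inverse_subsemigroup mul inv S -> {subset l <= S} -> {subset closure_step l <= S}.
Proof.
move=> [S_mul S_inv] lS z; rewrite mem_undup !mem_cat.
case/or3P => [/lS //|/allpairsP [[a b] [al bl ->]]|/mapP [a al ->]].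
- by apply: S_mul; apply: lS.
- by apply: S_inv; apply: lS.
Qed.

Lemma generates2_closure n x y :
  (forall z, z \in iter n closure_step [:: x; y]) -> generates2 x y.
Proof.
move=> closed S S_sub Sx Sy; apply/setP => z; rewrite inE.
have : {subset iter n closure_step [:: x; y] <= S}.
  elim: n {closed} => [|n IHn] /=; last exact: closure_step_sub.
  by move=> w; rewrite !inE => /orP [] /eqP ->.
by apply; apply: closed.
Qed.
End InverseCovers.

Local Open Scope group_scope.

Section Brandt.
Variable gT : finGroupType.

(* The Brandt semigroup B(G, 2): [Some (i, g, j)] is the 2x2 matrix whose only
   nonzero entry is g, at position (i, j), the indices 1 and 2 being [true] and
   [false]; [None] is the zero matrix. *)
Definition brandt : finType := option ((bool * gT) * bool).

Definition brandt_mul (x y : brandt) : brandt :=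
  match x, y with
  | Some (i, g, j), Some (k, h, l) => if j == k then Some (i, g * h, l) else None
  | _, _ => None
  end.

Definition brandt_inv (x : brandt) : brandt :=
  if x is Some (i, g, j) then Some (j, g^-1, i) else None.

Lemma eq_invg_of_mulg (g h : gT) : g * h * g = g -> h = g^-1.
Proof. by move=> E; apply: (mulgI g); rewrite mulgV; apply: (mulIg g); rewrite mul1g. Qed.

Lemma brandt_inverse_semigroup : is_inverse_semigroup brandt_mul brandt_inv.
Proof.
split; [|split].
- move=> [[[i g] j]|] [[[k h] l]|] [[[p q] r]|] //=.
  + by case: j; case: k; case: l; case: p; rewrite /= ?mulgA.
  + by case: (j == k).
- by move=> [[[i g] j]|] //=; case: i; case: j; rewrite /= mulgV mulVg !mul1g.
- move=> [[[i g] j]|] [[[k h] l]|] //=.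
  by case: i; case: j; case: k; case: l => //= -[/eq_invg_of_mulg ->].
Qed.

Section UpperBound.
Variable K0 : {group gT}.

Definition twist (x : gT) (b : bool) : gT := if b then 1 else x.

(* The subsemigroup of the matrices whose entry, conjugated by diag(1, x), lies in K0. *)
Definition brandt_twisted (x : gT) : {set brandt} :=
  [set z : brandt | if z is Some (i, g, j) then twist x i * g * (twist x j)^-1 \in K0 else true].

Definition brandt_diag : {set brandt} :=
  [set z : brandt | if z is Some (i, _, j) then i == j else true].

Lemma brandt_twisted_subsemigroup x :
  is_inverse_subsemigroup brandt_mul brandt_inv (brandt_twisted x).
Proof.
split.
- move=> [[[i g] j]|] [[[k h] l]|]; rewrite ?inE //= => Kg Kh.
  case: eqP => [jk|//]; subst k.
  by have := groupM Kg Kh; rewrite !mulgA mulgKV.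
- move=> [[[i g] j]|]; rewrite !inE //= => Kg.
  by rewrite -groupV !invMg !invgK mulgA.
Qed.

Lemma brandt_twisted_proper x : K0 \proper [set: gT] -> brandt_twisted x \proper [set: brandt].
Proof.
rewrite !properT => /eqP neK0; apply/eqP => full; apply: neK0; apply/setP => g.
have : (Some (true, g, true) : brandt) \in brandt_twisted x by rewrite full inE.
by rewrite !inE /= invg1 mulg1 mul1g.
Qed.

Lemma brandt_diag_subsemigroup : is_inverse_subsemigroup brandt_mul brandt_inv brandt_diag.
Proof.
split.
- move=> [[[i g] j]|] [[[k h] l]|]; rewrite ?inE //= => /eqP <- /eqP ->.
  by case: eqP => [->|] /=.
- by move=> [[[i g] j]|]; rewrite !inE //= eq_sym.
Qed.

Lemma brandt_diag_proper : brandt_diag \proper [set: brandt].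
Proof.
rewrite properT; apply/eqP => full.
have : (Some (true, 1, false) : brandt) \in brandt_diag by rewrite full inE.
by rewrite inE.
Qed.

Lemma repr_rcoset_mulV g : repr (K0 :* g) * g^-1 \in K0.
Proof. by rewrite -mem_rcoset mem_repr_rcoset. Qed.

Lemma brandt_coverable_index :
  K0 \proper [set: gT] -> inv_coverable brandt_mul brandt_inv #|[set: gT] : K0|.+1.
Proof.
move=> K0_proper.
pose F (C : option {C | C \in rcosets K0 [set: gT]}) :=
  if C is Some C then brandt_twisted (repr (val C)) else brandt_diag.
have -> : #|[set: gT] : K0|.+1 = #|{: option {C | C \in rcosets K0 [set: gT]}}|.
  by rewrite card_option card_sig.
apply: (@inv_coverable_card _ _ _ _ F) => [[C|]|z].
- by split; [apply: brandt_twisted_proper | apply: brandt_twisted_subsemigroup].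
- by split; [apply: brandt_diag_proper | apply: brandt_diag_subsemigroup].
have coset g : K0 :* g \in rcosets K0 [set: gT] by rewrite mem_rcosets -[g]mul1g mem_mulg ?inE.
case: z => [[[i g] j]|]; last by exists None; rewrite inE.
case: (eqVneq i j) => [<-|]; first by exists None; rewrite inE /=.
case: i; case: j => // _.
- exists (Some (exist _ (K0 :* g) (coset g))); rewrite inE /= mul1g.
  by rewrite -groupV invMg invgK repr_rcoset_mulV.
- exists (Some (exist _ (K0 :* g^-1) (coset g^-1))); rewrite inE /= invg1 mulg1.
  by have := repr_rcoset_mulV g^-1; rewrite invgK.
Qed.
End UpperBound.

Section LowerBound.
Variable m : nat.
Hypothesis m_gt1 : 1 < m.
Hypothesis index_ge : forall K : {group gT}, K \proper [set: gT] -> m <= #|[set: gT] : K|.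

Lemma proper_subgroup_card_bound (K : {group gT}) : K \proper [set: gT] -> (m * #|K| <= #|gT|)%N.
Proof.
move=> /index_ge le_m; rewrite -cardsT -(Lagrange (subsetT K)) [(m * _)%N]mulnC.
by rewrite leq_mul2l le_m orbT.
Qed.

Definition brandt_entries12 (S : {set brandt}) : {set gT} :=
  [set g | (Some (true, g, false) : brandt) \in S].
Definition brandt_entries11 (S : {set brandt}) : {set gT} :=
  [set g | (Some (true, g, true) : brandt) \in S].

Section Subsemigroup.
Variable S : {set brandt}.
Hypothesis S_sub : is_inverse_subsemigroup brandt_mul brandt_inv S.
Variable g0 : gT.
Hypothesis S_g0 : (Some (true, g0, false) : brandt) \in S.

Let S_mul x y : x \in S -> y \in S -> brandt_mul x y \in S := S_sub.1 x y.
Let S_g0V : (Some (false, g0^-1, true) : brandt) \in S := S_sub.2 _ S_g0.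

Lemma brandt_entries11_group_set : group_set (brandt_entries11 S).
Proof.
apply/group_setP; split => [|x y]; last by rewrite !inE; apply: S_mul.
by rewrite inE -(mulgV g0); apply: S_mul S_g0 S_g0V.
Qed.

Lemma brandt_entries12_rcoset : brandt_entries12 S = brandt_entries11 S :* g0.
Proof.
apply/setP => g; rewrite mem_rcoset !inE; apply/idP/idP => S_g.
- exact: S_mul S_g S_g0V.
- by have := S_mul S_g S_g0; rewrite /= mulgKV.
Qed.

Lemma brandt_entries11_proper :
  S \proper [set: brandt] -> Group brandt_entries11_group_set \proper [set: gT].
Proof.
rewrite !properT => /eqP neS; apply/eqP => /= full; apply: neS; apply/setP => z.
have on_S g : (Some (true, g, true) : brandt) \in S.
  by move: (in_setT g); rewrite -full inE.
have off_S g : (Some (true, g, false) : brandt) \in S.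
  by have := S_mul (on_S (g * g0^-1)) S_g0; rewrite /= mulgKV.
rewrite inE; case: z => [[[[] g] []]|].
- exact: on_S.
- exact: off_S.
- by have := S_sub.2 _ (off_S g^-1); rewrite /= invgK.
- by have := S_mul (S_sub.2 _ (off_S g^-1)) (off_S 1); rewrite /= invgK mulg1.
- exact: S_mul S_g0 S_g0.
Qed.

Lemma brandt_entries_card : S \proper [set: brandt] ->
  #|brandt_entries12 S| = #|brandt_entries11 S| /\ (m * #|brandt_entries11 S| <= #|gT|)%N.
Proof.
move=> S_proper; rewrite brandt_entries12_rcoset card_rcoset; split=> //.
exact: (proper_subgroup_card_bound (brandt_entries11_proper S_proper)).
Qed.

Lemma brandt_entries_card_bound : S \proper [set: brandt] ->
  (m * (#|brandt_entries12 S| + #|brandt_entries11 S :\ 1%g|) + m <= 2 * #|gT|)%N.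
Proof.
move=> /brandt_entries_card [-> le_on].
have on1 : 1 \in brandt_entries11 S := group1 (Group brandt_entries11_group_set).
have : #|brandt_entries11 S :\ 1%g|.+1 = #|brandt_entries11 S| by rewrite [RHS](cardsD1 1%g) on1.
nia.
Qed.
End Subsemigroup.

Lemma brandt_entries12_card_bound (S : {set brandt}) : S \proper [set: brandt] ->
  is_inverse_subsemigroup brandt_mul brandt_inv S -> (m * #|brandt_entries12 S| <= #|gT|)%N.
Proof.
move=> S_proper S_sub; have [-> | /set0Pn [g0]] := eqVneq (brandt_entries12 S) set0.
  by rewrite cards0 muln0.
by rewrite inE => S_g0; have [-> //] := brandt_entries_card S_sub S_g0 S_proper.
Qed.

Section Cover.
Variables (k : nat) (F : 'I_k -> {set brandt}).
Hypothesis F_ok : forall i,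
  F i \proper [set: brandt] /\ is_inverse_subsemigroup brandt_mul brandt_inv (F i).
Hypothesis F_cover : forall z, exists i, z \in F i.

Lemma brandt_cover_entries12 : #|gT| <= \sum_(i < k) #|brandt_entries12 (F i)|.
Proof.
rewrite -cardsT; apply: card_le_sum_cover => g _.
by have [i Fi] := F_cover (Some (true, g, false)); exists i; rewrite inE.
Qed.

Lemma brandt_cover_entries11 : #|gT| <= (\sum_(i < k) #|brandt_entries11 (F i) :\ 1%g|).+1.
Proof.
rewrite -cardsT (cardsD1 1%g) inE add1n ltnS; apply: card_le_sum_cover => g.
rewrite !inE => /andP [ne1 _]; have [i Fi] := F_cover (Some (true, g, true)).
by exists i; rewrite !inE ne1.
Qed.

Lemma brandt_cover_missing12 i0 : brandt_entries12 (F i0) = set0 -> m < k.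
Proof.
move=> empty12; have N_gt0 : 0 < #|gT| by apply/card_gt0P; exists 1%g.
have le_sum : (\sum_(i < k | i != i0) m * #|brandt_entries12 (F i)|
               <= \sum_(i < k | i != i0) #|gT|)%N.
  by apply: leq_sum => i _; exact: brandt_entries12_card_bound (F_ok i).1 (F_ok i).2.
have : (m * #|gT| <= k.-1 * #|gT|)%N.
  apply: leq_trans (leq_mul (leqnn m) brandt_cover_entries12) _.
  rewrite big_distrr (bigD1 i0) //= empty12 cards0 muln0 add0n.
  by apply: leq_trans le_sum _; rewrite sum_nat_const cardC1 card_ord.
rewrite leq_pmul2r //; lia.
Qed.

Lemma brandt_cover_meeting12 : (forall i, brandt_entries12 (F i) != set0) -> m < k.
Proof.
move=> nonempty12; have N_gt0 : 0 < #|gT| by apply/card_gt0P; exists 1%g.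
have le_sum : (\sum_(i < k) (m * (#|brandt_entries12 (F i)| + #|brandt_entries11 (F i) :\ 1%g|) + m)
               <= \sum_(i < k) 2 * #|gT|)%N.
  apply: leq_sum => i _; have /set0Pn [g0] := nonempty12 i; rewrite inE => F_g0.
  by have := brandt_entries_card_bound (F_ok i).2 F_g0 (F_ok i).1.
move: le_sum brandt_cover_entries12 brandt_cover_entries11.
rewrite big_split /= -big_distrr big_split /= !sum_nat_const card_ord.
set A := \sum_(i < k) _; set B := \sum_(i < k) _; set N := #|gT| => le_sum le_NA le_NB.
rewrite ltnNge; apply/negP => le_km.
have : (m * (2 * N) <= m * (A + B + 1))%N by rewrite leq_mul2l; lia.
nia.
Qed.
End Cover.

Lemma brandt_not_coverable k : k <= m -> ~ inv_coverable brandt_mul brandt_inv k.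
Proof.
move=> le_km [F [F_ok F_cover]]; apply/negP: le_km; rewrite -ltnNge.
have [i0 /eqP empty12 | nonempty12] := pickP (fun i => brandt_entries12 (F i) == set0).
  exact: brandt_cover_missing12 F_ok F_cover i0 empty12.
by apply: brandt_cover_meeting12 F_ok F_cover _ => i; rewrite nonempty12.
Qed.
End LowerBound.

Lemma brandt_sigma_i (K0 : {group gT}) :
  1 < #|[set: gT] : K0| ->
  (forall K : {group gT}, K \proper [set: gT] -> #|[set: gT] : K0| <= #|[set: gT] : K|) ->
  sigma_i_eq brandt_mul brandt_inv #|[set: gT] : K0|.+1.
Proof.
move=> idx_gt1 idx_min; have K0_proper : K0 \proper [set: gT].
  by rewrite properT; apply: contraTneq idx_gt1 => ->; rewrite indexgg.
split=> //; split; first exact: brandt_coverable_index.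
by move=> k _; rewrite ltnS => /(brandt_not_coverable idx_gt1 idx_min).
Qed.
End Brandt.

Lemma index_proper_prime (gT : finGroupType) (K : {group gT}) :
  prime #|gT| -> K \proper [set: gT] -> #|[set: gT] : K| = #|gT|.
Proof.
move=> p_prime; rewrite properT eqEsubset subsetT /= -indexg_eq1 => idx_ne1.
have /(primeP p_prime).2 : #|[set: gT] : K| %| #|gT| by rewrite -cardsT dvdn_indexg.
by rewrite (negPf idx_ne1) => /eqP.
Qed.

Lemma brandt_sigma_i_prime_order (gT : finGroupType) :
  prime #|gT| -> sigma_i_eq (@brandt_mul gT) (@brandt_inv gT) #|gT|.+1.
Proof.
move=> p_prime; rewrite -[#|gT|]cardsT -(indexg1 [set: gT]).
apply: brandt_sigma_i => [|K /(index_proper_prime p_prime) ->].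
  by rewrite indexg1 cardsT prime_gt1.
by rewrite indexg1 cardsT.
Qed.

Lemma brandt_sigma_i_Zp p : prime p -> sigma_i_eq (@brandt_mul 'Z_p) (@brandt_inv 'Z_p) p.+1.
Proof.
move=> p_prime; have := @brandt_sigma_i_prime_order 'Z_p.
by rewrite card_ord Zp_cast ?prime_gt1 //; apply.
Qed.

Lemma simple_card_le_fact_index (gT : finGroupType) (G H : {group gT}) :
  simple G -> H \subset G -> H :!=: G -> #|G| <= #|G : H|`!.
Proof.
move=> /simpleP [_ simG] sHG neHG.
have act_rcosets := actsRs_rcosets H G.
have faithful_rcosets : [faithful G, on rcosets H G | 'Rs].
  rewrite /faithful astabRs_rcosets.
  have [->|coreG] := simG _ (gcore_normal sHG); first by rewrite setIg1 subxx.
  move: (gcore_sub H G); rewrite coreG => sGH.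
  by case/negP: neHG; rewrite eqEsubset sHG sGH.
rewrite (isom_card (faithful_isom act_rcosets faithful_rcosets)) -card_perm.
apply: subset_leq_card; apply/subsetP => p /morphimP [a _ Ga ->].
rewrite unfold_in; apply/subsetP => x; rewrite inE /= actpermE /= /actby Ga andbT.
by case: (x \in rcosets H G) => //; rewrite eqxx.
Qed.

Section Alternating.
Variable m : nat.
Hypothesis m_gt4 : 4 < m.

Definition alt : finGroupType := subg_of 'Alt_('I_m).

Lemma card_alt_Alt : #|alt| = #|'Alt_('I_m)|.
Proof. by rewrite -cardsT -(card_isog (isog_subg 'Alt_('I_m))). Qed.

Lemma card_alt : (2 * #|alt|)%N = m`!.
Proof. by rewrite card_alt_Alt card_Alt card_ord //; lia. Qed.

Lemma simple_alt : simple [set: alt].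
Proof. by rewrite -(isog_simple (isog_subg _)); apply: simple_Alt5; rewrite card_ord; lia. Qed.

(* A subgroup of index i < m would give |Alt m| <= i! <= (m-1)! < m!/2. *)
Lemma alt_index_proper (K : {group alt}) : K \proper [set: alt] -> m <= #|[set: alt] : K|.
Proof.
rewrite properT => neK; rewrite leqNgt; apply/negP => lt_idx.
have le_fact : #|alt| <= m.-1`!.
  rewrite -cardsT; apply: leq_trans (simple_card_le_fact_index simple_alt (subsetT K) neK) _.
  by apply: leq_fact; rewrite -ltnS prednK; [exact: lt_idx | lia].
have m_fact : m`! = (m * m.-1`!)%N by rewrite -{1}(prednK (_ : 0 < m)) ?factS //; lia.
have := fact_gt0 m.-1; move: card_alt; rewrite m_fact; nia.
Qed.

Lemma alt_index_stabiliser : exists K0 : {group alt}, #|[set: alt] : K0| = m.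
Proof.
have x : 'I_m by exists 0; lia.
have trans : [transitive 'Alt_('I_m), on [set: 'I_m] | 'P].
  by apply: (ntransitive1 (m := #|'I_m|.-2)); [rewrite card_ord; lia | exact: Alt_trans].
have card_orbit : #|orbit 'P 'Alt_('I_m) x| = m by rewrite (atransP trans) ?inE // cardsT card_ord.
have stab_sub : 'C_('Alt_('I_m))[x | 'P] \subset 'Alt_('I_m) by rewrite subsetIl.
exists (subg 'Alt_('I_m) @* 'C_('Alt_('I_m))[x | 'P])%G.
have := Lagrange (subsetT (subg 'Alt_('I_m) @* 'C_('Alt_('I_m))[x | 'P])%G).
rewrite cardsT card_alt_Alt (card_injm (injm_subg _) stab_sub).
rewrite -(card_orbit_stab 'P 'Alt_('I_m) x) card_orbit.
by move/eqP; rewrite [(m * _)%N]mulnC eqn_pmul2l ?cardG_gt0 // => /eqP.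
Qed.

Lemma brandt_sigma_i_alt : sigma_i_eq (@brandt_mul alt) (@brandt_inv alt) m.+1.
Proof.
have [K0 idxK0] := alt_index_stabiliser; rewrite -idxK0.
by apply: brandt_sigma_i => [|K /alt_index_proper]; rewrite idxK0 //; lia.
Qed.
End Alternating.

(* A4 as the semidirect product of the Klein group (bool * bool, xor) by C3,
   acting through the order-3 automorphism [klein_rot]. *)
Definition klein_rot (v : bool * bool) : bool * bool := (v.2, v.1 (+) v.2).
Definition klein_add (v w : bool * bool) : bool * bool := (v.1 (+) w.1, v.2 (+) w.2).
Definition mod3 (n : nat) : 'I_3 := Ordinal (ltn_pmod n (isT : 0 < 3)).

Definition a4 : finType := ((bool * bool) * 'I_3)%type.
Definition a4_mul (p q : a4) : a4 :=
  let: (v, a) := p in let: (w, b) := q in (klein_add v (iter a klein_rot w), mod3 (a + b)).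
Definition a4_inv (p : a4) : a4 :=
  let: (v, a) := p in (iter (3 - a) klein_rot v, mod3 (3 - a)).

Definition klein_elems : seq (bool * bool) :=
  [:: (true, true); (true, false); (false, true); (false, false)].
Definition a4_elems : seq a4 := [seq (v, a) | v <- klein_elems, a <- [:: mod3 0; mod3 1; mod3 2]].

(* [enum a4] does not reduce, so finite checks run over the explicit list [a4_elems]. *)
Lemma a4_allP (P : pred a4) : all P a4_elems -> forall a, P a.
Proof.
move=> /allP all_P [[x y] [a lt_a3]]; apply: all_P.
by case: x; case: y; move: lt_a3; case: a => [|[|[|a]]] lt_a3 //; vm_compute; reflexivity.
Qed.

Lemma a4_inverse_semigroup : is_inverse_semigroup a4_mul a4_inv.
Proof.
have assoc : all (fun a => all (fun b => all (fun c =>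
    a4_mul a (a4_mul b c) == a4_mul (a4_mul a b) c) a4_elems) a4_elems) a4_elems.
  by vm_compute.
have regular : all (fun a => (a4_mul (a4_mul a (a4_inv a)) a == a)
    && (a4_mul (a4_mul (a4_inv a) a) (a4_inv a) == a4_inv a)) a4_elems.
  by vm_compute.
have unique : all (fun a => all (fun b => (a4_mul (a4_mul a b) a == a) ==>
    (a4_mul (a4_mul b a) b == b) ==> (b == a4_inv a)) a4_elems) a4_elems.
  by vm_compute.
split; [|split].
- move=> a b c; apply/eqP; move: c; apply: a4_allP.
  by move: b; apply: a4_allP; move: a; apply: a4_allP.
- by move=> a; have /andP [/eqP -> /eqP ->] := a4_allP regular a.
- move=> a b aba bab; apply/eqP; have := a4_allP (a4_allP unique a) b.
  by rewrite aba bab !eqxx.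
Qed.

(* The parts are the four subgroups of order 3, generated by the [a4_rot i], and
   the Klein subgroup. *)
Definition a4_rot (i : nat) : a4 := (nth (false, false) klein_elems i, mod3 1).
Definition a4_partb (i : nat) (z : a4) : bool :=
  if i < 4 then z \in iter 2 (closure_step a4_mul a4_inv) [:: a4_rot i] else z.2 == mod3 0.
Definition a4_witness (i : nat) : a4 := if i < 4 then a4_rot i else ((true, false), mod3 0).

Definition a4_part (i : 'I_5) : {set a4} := [set z | a4_partb i z].

Lemma mem_iota5 (i : 'I_5) : (i : nat) \in iota 0 5.
Proof. by rewrite mem_iota ltn_ord. Qed.

Lemma a4_part_proper i : a4_part i \proper [set: a4].
Proof.
have proper : all (fun i => ~~ all (a4_partb i) a4_elems) (iota 0 5) by vm_compute.
rewrite properT; apply: contra (allP proper i (mem_iota5 i)) => /eqP full.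
by apply/allP => z _; rewrite -in_set -/(a4_part i) full inE.
Qed.

Lemma a4_part_subsemigroup i : is_inverse_subsemigroup a4_mul a4_inv (a4_part i).
Proof.
have closed_mul : all (fun i => all (fun a => all (fun b =>
    a4_partb i a ==> a4_partb i b ==> a4_partb i (a4_mul a b)) a4_elems) a4_elems) (iota 0 5).
  by vm_compute.
have closed_inv : all (fun i => all (fun a =>
    a4_partb i a ==> a4_partb i (a4_inv a)) a4_elems) (iota 0 5).
  by vm_compute.
split=> [a b|a]; rewrite !inE.
  by have := a4_allP (a4_allP (allP closed_mul i (mem_iota5 i)) a) b => /implyP h /h /implyP.
by have := a4_allP (allP closed_inv i (mem_iota5 i)) a => /implyP.
Qed.

Lemma a4_parts_cover z : exists i, z \in a4_part i.
Proof.
have cover : all (fun z => has (fun i => a4_partb i z) (iota 0 5)) a4_elems by vm_compute.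
have /hasP [i] := a4_allP cover z; rewrite mem_iota => /andP [_ lt_i5] cover_z.
by exists (Ordinal lt_i5); rewrite inE.
Qed.

Lemma a4_witnesses_generate (i j : 'I_5) :
  i != j -> generates2 a4_mul a4_inv (a4_witness i) (a4_witness j).
Proof.
have generating : all (fun i => all (fun j => (i == j) || all (fun z => z \in
    iter 3 (closure_step a4_mul a4_inv) [:: a4_witness i; a4_witness j]) a4_elems)
    (iota 0 5)) (iota 0 5) by vm_compute.
move=> ne_ij; have ne_ij_nat : (i : nat) != j := ne_ij.
apply: (generates2_closure (n := 3)); apply: a4_allP.
by have := allP (allP generating i (mem_iota5 i)) j (mem_iota5 j); rewrite (negPf ne_ij_nat).
Qed.

Lemma a4_sigma_i : sigma_i_eq a4_mul a4_inv 5.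
Proof.
apply: (@sigma_i_eq_generating_cover _ _ _ _ a4_part (fun i => a4_witness i)) => //.
- by move=> i; split; [exact: a4_part_proper | exact: a4_part_subsemigroup].
- exact: a4_parts_cover.
- exact: a4_witnesses_generate.
Qed.

Lemma bool_inverse_semigroup : is_inverse_semigroup andb id.
Proof. by split; [|split] => [[] [] []|[]|[] []]. Qed.

Lemma bool_sigma_i : sigma_i_eq andb id 2.
Proof.
apply: (@sigma_i_eq_generating_cover _ _ _ _ (fun i : 'I_2 => [set odd i]) (fun i => odd i))
  => // [i|b|i j ne_ij].
- split; first by rewrite properT; apply/eqP => /setP /(_ (~~ odd i)); rewrite !inE; case: odd.
  by split=> [a b|a]; rewrite !inE // => /eqP -> /eqP ->; rewrite andbb.
- by exists (inord b); rewrite inE inordK //; case: b.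
- have ne_odd : odd i != odd j by case: i j ne_ij => [[|[|?]] ?] [[|[|?]] ?].
  move=> S _ Si Sj; apply/setP => b; rewrite inE.
  by case: b (odd i) (odd j) Si Sj ne_odd => [] [] [].
Qed.

Theorem mainTheorem3 (n : nat) (hn : 2 <= n) :
  exists (T : finType) (mul : T -> T -> T) (inv : T -> T),
    is_inverse_semigroup mul inv /\ sigma_i_eq mul inv n.
Proof.
case: n hn => [|[|[|[|[|[|n]]]]]] // _.
- exists bool, andb, id; split; [exact: bool_inverse_semigroup | exact: bool_sigma_i].
- exists (brandt 'Z_2), (@brandt_mul _), (@brandt_inv _).
  by split; [exact: brandt_inverse_semigroup | exact: brandt_sigma_i_Zp].
- exists (brandt 'Z_3), (@brandt_mul _), (@brandt_inv _).
  by split; [exact: brandt_inverse_semigroup | exact: brandt_sigma_i_Zp].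
- exists a4, a4_mul, a4_inv; split; [exact: a4_inverse_semigroup | exact: a4_sigma_i].
- exists (brandt (alt n.+4.+1)), (@brandt_mul _), (@brandt_inv _).
  by split; [exact: brandt_inverse_semigroup | exact: brandt_sigma_i_alt].
Qed.
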